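(* Let $G$ be a finite group and $R,R'$ orthogonal $G$-representations. Then, in the lattice of $G$-weak indexing systems, $\underline{\mathbb F}^{R}\vee\underline{\mathbb F}^{R'}=\underline{\mathbb F}^{R\oplus R'}$.
   Context: For $H\le G$, $\mathbb F_H$ is the category of finite $H$-sets, $*_H$ the one-point $H$-set. A $G$-weak indexing system is an assignment $H\mapsto\mathcal C_H$ of isomorphism-closed classes of finite $H$-sets, stable under restriction to subgroups and conjugation, such that $\mathcal C_H\neq\emptyset$ implies $*_H\in\mathcal C_H$, and closed under self-indexed coproducts: if $S\in\mathcal C_H$ and for each orbit $[H/K]\subseteq S$ (with chosen point) a $K$-set $T\in\mathcal C_K$ is given, then $\coprod\mathrm{Ind}_K^HT\in\mathcal C_H$. These form a lattice under inclusion, $\vee$ denoting the join. For an orthogonal $G$-representation $R$, $\underline{\mathbb F}^R$ is the $G$-weak indexing system $\mathbb F^R_H=\{S\in\mathbb F_H\mid\text{there is an }H\text{-equivariant embedding }S\hookrightarrow R\}$. *)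

From HB Require Import structures.
From mathcomp Require Import all_boot all_order all_algebra all_fingroup.
From mathcomp Require Import mxrepresentation.
From mathcomp Require Import reals.
Set Implicit Arguments.
Unset Strict Implicit.
Unset Printing Implicit Defensive.
Import GRing.Theory.
Local Open Scope ring_scope.

(* Finite H-sets are encoded as a finite type T with a RIGHT action
   act : T -> gT -> T (MathComp convention), required to be an action
   only for elements of H. *)
Definition is_Hset (gT : finGroupType) (H : {set gT}) (T : finType)
    (act : T -> gT -> T) : Prop :=
  (forall x, act x 1%g = x) /\
  (forall x a b, a \in H -> b \in H -> act x (a * b)%g = act (act x a) b).

Arguments is_Hset {gT} H T act.

Definition hclass (gT : finGroupType) := forall (T : finType), (T -> gT -> T) -> Prop.

(* An assignment H |-> C H of classes (only H <= G matters). *)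
Definition assignment (gT : finGroupType) := {set gT} -> hclass gT.

Definition Hequiv (gT : finGroupType) (H : {set gT}) (T T' : finType)
    (a : T -> gT -> T) (a' : T' -> gT -> T') (f : T -> T') : Prop :=
  forall x h, h \in H -> f (a x h) = a' (f x) h.

Section WIS.
Variables (gT : finGroupType) (G : {group gT}).

Definition iso_closed (C : assignment gT) : Prop :=
  forall (H : {group gT}), H \subset G ->
  forall (T T' : finType) (a : T -> gT -> T) (a' : T' -> gT -> T'),
    is_Hset H T a -> is_Hset H T' a' ->
    forall f : T -> T', bijective f -> Hequiv H a a' f ->
    C H T a -> C H T' a'.

Definition restr_closed (C : assignment gT) : Prop :=
  forall (H K : {group gT}), H \subset G -> K \subset H ->
  forall (T : finType) (a : T -> gT -> T),
    is_Hset H T a -> C H T a -> C K T a.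

(* conjugation: H :^ g = g^-1 H g, and the H-set S becomes the
   (H :^ g)-set with x . k := x . (g k g^-1). *)
Definition conj_closed (C : assignment gT) : Prop :=
  forall (H : {group gT}), H \subset G -> forall g, g \in G ->
  forall (T : finType) (a : T -> gT -> T),
    is_Hset H T a -> C H T a ->
    C (H :^ g)%g T (fun x k => a x (g * k * g^-1)%g).

Definition point_closed (C : assignment gT) : Prop :=
  forall (H : {group gT}), H \subset G ->
  (exists (T : finType) (a : T -> gT -> T), is_Hset H T a /\ C H T a) ->
  C H unit (fun x _ => x).

Definition stabH (H : {set gT}) (TS : finType) (aS : TS -> gT -> TS) (s : TS)
  : {set gT} := [set h in H | aS s h == s].

(* Class of (t, h) in T x H modulo (t.k, h) ~ (t, k h), k in K:
   it is {(t.k, k^-1 h) | k in K}.  These classes form Ind_K^H T. *)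
Definition ind_cls (K : {set gT}) (T : finType) (aT : T -> gT -> T)
    (t : T) (h : gT) : {set (T * gT)} :=
  [set (aT t k, (k^-1 * h)%g) | k in K].

Definition ind_act (TS : finType) (T : TS -> finType)
    (p : {s : TS & {set (T s * gT)}}) (g : gT) : {s : TS & {set (T s * gT)}} :=
  let: existT s A := p in
  existT (fun s => {set (T s * gT)}) s [set (x.1, (x.2 * g)%g) | x in A].

(* Elements of the coproduct over orbit representatives s (rep s = s) of
   Ind_{Stab_H(s)}^H (T s). *)
Definition coprod_elt (H : {set gT}) (TS : finType) (aS : TS -> gT -> TS)
    (rep : TS -> TS) (T : TS -> finType) (aT : forall s, T s -> gT -> T s)
    (p : {s : TS & {set (T s * gT)}}) : Prop :=
  let: existT s A := p in
  rep s = s /\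
  exists (t : T s) (h : gT), h \in H /\ A = ind_cls (stabH H aS s) (aT s) t h.

Definition orbit_reps (H : {set gT}) (TS : finType) (aS : TS -> gT -> TS)
    (rep : TS -> TS) : Prop :=
  (forall s h, h \in H -> rep (aS s h) = rep s) /\
  (forall s, exists2 h, h \in H & aS s h = rep s).

(* Closure under self-indexed coproducts: any H-set X isomorphic to
   coprod_{orbits H/K of S} Ind_K^H T_K lies in C H. *)
Definition coprod_closed (C : assignment gT) : Prop :=
  forall (H : {group gT}), H \subset G ->
  forall (TS : finType) (aS : TS -> gT -> TS),
    is_Hset H TS aS -> C H TS aS ->
  forall rep : TS -> TS, orbit_reps H aS rep ->
  forall (T : TS -> finType) (aT : forall s, T s -> gT -> T s),
    (forall s, rep s = s ->
       is_Hset (stabH H aS s) (T s) (aT s) /\ C (stabH H aS s) (T s) (aT s)) ->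
  forall (TX : finType) (aX : TX -> gT -> TX), is_Hset H TX aX ->
  forall f : TX -> {s : TS & {set (T s * gT)}},
    injective f ->
    (forall p, coprod_elt H aS rep aT p <-> exists x, f x = p) ->
    Hequiv H aX (@ind_act TS T) f ->
    C H TX aX.

Definition weak_indexing_system (C : assignment gT) : Prop :=
  [/\ iso_closed C, restr_closed C, conj_closed C, point_closed C
    & coprod_closed C].

Definition sub_assign (C D : assignment gT) : Prop :=
  forall (H : {group gT}), H \subset G ->
  forall (T : finType) (a : T -> gT -> T), is_Hset H T a -> C H T a -> D H T a.

Definition is_wis_join (C1 C2 J : assignment gT) : Prop :=
  [/\ weak_indexing_system J, sub_assign C1 J, sub_assign C2 J &
      forall D, weak_indexing_system D -> sub_assign C1 D -> sub_assign C2 D ->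
        sub_assign J D].

End WIS.

Definition orth_rep (gT : finGroupType) (G : {group gT}) (R : realType) (n : nat)
    (rho : gT -> 'M[R]_n) : Prop :=
  mx_repr G rho /\ (forall g, g \in G -> rho g *m (rho g)^T = 1%:M).

Definition dsum_rep (gT : finGroupType) (R : realType) (n n' : nat)
    (rho : gT -> 'M[R]_n) (rho' : gT -> 'M[R]_n') : gT -> 'M[R]_(n + n') :=
  fun g => block_mx (rho g) 0 0 (rho' g).

Definition FR (gT : finGroupType) (R : realType) (n : nat)
    (rho : gT -> 'M[R]_n) : assignment gT :=
  fun H T a => exists f : T -> 'rV[R]_n,
    injective f /\ forall x h, h \in H -> f (a x h) = f x *m rho h.

From mathcomp Require Import all_boot all_order all_algebra all_fingroup.
From mathcomp Require Import mxrepresentation reals lra.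
Set Implicit Arguments.
Unset Strict Implicit.
Unset Printing Implicit Defensive.
Import Order.TTheory GRing.Theory Num.Theory.
Local Open Scope ring_scope.

(** The inclusions of the summands put F^R and F^R' inside F^(R+R'),
    and F^R is a weak indexing system: the only non-formal axiom is closure under
    self-indexed coproducts. If S embeds in R and each T_s embeds in R as a
    Stab(s)-set, the class [t, h] of the coproduct can be sent to
    (e_S(s) h, e_s(t) h) in R + R; this is well defined and injective, and
    composing with (v, w) |-> v + eps w keeps it injective for all but finitely
    many eps.
    Conversely, let X embed in R + R' with first component p. Then X is the
    self-indexed coproduct, over the orbits of the image S = p(X) in R, of the
    inductions of the fibres of p; each fibre is a Stab(s)-set embedded in R' by
    the second component. Hence every weak indexing system containing F^R and
    F^R' contains X. *)

Section InducedSets.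
Variable gT : finGroupType.

Lemma ind_cls_shift (K : {group gT}) (T : finType) (aT : T -> gT -> T) t h k :
  is_Hset K T aT -> k \in K -> ind_cls K aT (aT t k) (k^-1 * h)%g = ind_cls K aT t h.
Proof.
move=> [_ aTM] kK; apply/setP=> z.
apply/imsetP/imsetP=> [[j jK ->]|[j jK ->]].
- exists (k * j)%g; first by rewrite groupM.
  by rewrite aTM // invMg -mulgA.
- exists (k^-1 * j)%g; first by rewrite groupM ?groupV.
  by rewrite -aTM ?groupM ?groupV // mulKVg invMg invgK -mulgA mulKVg.
Qed.

Lemma ind_act_cls (K : {set gT}) (T : finType) (aT : T -> gT -> T) t h g :
  [set (x.1, (x.2 * g)%g) | x in ind_cls K aT t h] = ind_cls K aT t (h * g)%g.
Proof. by rewrite /ind_cls -imset_comp; apply: eq_imset => k /=; rewrite mulgA. Qed.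

Lemma eq_ind_cls (K : {group gT}) (T : finType) (aT : T -> gT -> T) t h t' h' :
  is_Hset K T aT -> ind_cls K aT t h = ind_cls K aT t' h' ->
  exists2 k, k \in K & t = aT t' k /\ h = (k^-1 * h')%g.
Proof.
move=> [aT1 _] E; have : (t, h) \in ind_cls K aT t h.
  by apply/imsetP; exists 1%g; rewrite ?aT1 ?invg1 ?mul1g.
by rewrite E => /imsetP[k kK [-> ->]]; exists k.
Qed.

Variables (H : {group gT}) (TS : finType) (aS : TS -> gT -> TS).

Lemma stabHP s k : reflect (k \in H /\ aS s k = s) (k \in stabH H aS s).
Proof. by rewrite inE; apply: (iffP andP) => [[kH /eqP]|[kH ->]]. Qed.

Lemma stabH_sub s : stabH H aS s \subset H.
Proof. by apply/subsetP=> k /stabHP[]. Qed.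

Hypothesis HS : is_Hset H TS aS.

Lemma stabH_group_set s : group_set (stabH H aS s).
Proof.
have [aS1 aSM] := HS; apply/group_setP; split; first by apply/stabHP.
by move=> x y /stabHP[xH xs] /stabHP[yH ys]; apply/stabHP; rewrite groupM // aSM // xs.
Qed.

Definition stabH_group s : {group gT} := Group (stabH_group_set s).

Lemma exists_orbit_reps : exists rep : TS -> TS, orbit_reps H aS rep.
Proof.
have [aS1 aSM] := HS; pose orb s := [set aS s h | h in H].
have orb_self s : s \in orb s by apply/imsetP; exists 1%g; rewrite ?aS1.
have orb_act s h : h \in H -> orb (aS s h) = orb s.
  move=> hH; apply/setP=> w; apply/imsetP/imsetP=> [[k kH ->]|[k kH ->]].
    by exists (h * k)%g; rewrite ?groupM ?aSM.
  by exists (h^-1 * k)%g; rewrite ?groupM ?groupV // -aSM ?groupM ?groupV ?mulKVg.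
exists (fun s => odflt s [pick w in orb s]); split=> [s h hH | s].
  rewrite orb_act //; case: pickP => [//|none].
  by have := none s; rewrite orb_self.
case: pickP => [w /imsetP[h hH ->] | none]; first by exists h.
by have := none s; rewrite orb_self.
Qed.

End InducedSets.

Section Fibration.
Variables (gT : finGroupType) (H : {group gT}).
Variables (TS : finType) (aS : TS -> gT -> TS) (TX : finType) (aX : TX -> gT -> TX).
Variable pi : TX -> TS.
Hypotheses (HS : is_Hset H TS aS) (HX : is_Hset H TX aX) (piE : Hequiv H aX aS pi).

Definition fibre (s : TS) : finType := {x : TX | pi x == s}.

Definition fibre_act s : fibre s -> gT -> fibre s := fun y k => insubd y (aX (val y) k).
Arguments fibre_act : clear implicits.

Lemma fibre_actE s (y : fibre s) k :
  k \in stabH H aS s -> val (fibre_act s y k) = aX (val y) k.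
Proof. by move=> /stabHP[kH ks]; rewrite insubdK // -topredE /= piE // (eqP (valP y)) ks. Qed.

Lemma fibre_Hset s : is_Hset (stabH H aS s) (fibre s) (fibre_act s).
Proof.
have [aX1 aXM] := HX; have K1 := group1 (stabH_group HS s).
split=> [y | y a b aK bK]; apply: val_inj; first by rewrite fibre_actE ?aX1.
have [/stabHP[aH _] /stabHP[bH _]] := (aK, bK).
by rewrite !fibre_actE ?aXM // (groupM (G := stabH_group HS s)).
Qed.

Variables (rep : TS -> TS) (repP : orbit_reps H aS rep).

Definition to_rep x : gT := odflt 1%g [pick g in H | aS (pi x) g == rep (pi x)].

Lemma to_repP x : to_rep x \in H /\ aS (pi x) (to_rep x) = rep (pi x).
Proof.
rewrite /to_rep; case: pickP => [g /andP[gH /eqP] // | none].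
by have [h hH hE] := repP.2 (pi x); have := none h; rewrite hH hE eqxx.
Qed.

Lemma fibre_to_rep x : pi (aX x (to_rep x)) == rep (pi x).
Proof. by have [gH <-] := to_repP x; rewrite piE. Qed.

Definition fibre_coord x : {s : TS & {set (fibre s * gT)}} :=
  Tagged (fun s => {set (fibre s * gT)})
    (ind_cls (stabH H aS (rep (pi x))) (fibre_act _)
       (Sub (aX x (to_rep x)) (fibre_to_rep x)) (to_rep x)^-1).

Lemma fibre_coord_inj : injective fibre_coord.
Proof.
have [aX1 aXM] := HX; move=> x y E.
have Er : rep (pi x) = rep (pi y) := congr1 tag E.
move: E; rewrite /fibre_coord; move: (fibre_to_rep x) (fibre_to_rep y).
rewrite Er => qx qy E0; have {E0} E := eq_from_Tagged E0.
have [k kK [/(congr1 val) Ex Eg]] := eq_ind_cls (K := stabH_group HS _) (fibre_Hset _) E.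
rewrite fibre_actE //= in Ex.
have [[gxH _] [gyH _]] := (to_repP x, to_repP y); have /stabHP[kH _] := kK.
have -> : x = aX (aX x (to_rep x)) (to_rep x)^-1 by rewrite -aXM ?groupV // mulgV aX1.
by rewrite Ex Eg -!aXM ?groupM ?groupV // mulKVg mulgV aX1.
Qed.

Lemma fibre_coordP p :
  coprod_elt H aS rep fibre_act p <-> exists x, fibre_coord x = p.
Proof.
have [[_ aSM] [_ aXM]] := (HS, HX); split=> [|[x <-]]; last first.
  rewrite /fibre_coord /=; split; first by have [gH gE] := to_repP x; rewrite -{1}gE repP.1.
  exists (Sub (aX x (to_rep x)) (fibre_to_rep x)), (to_rep x)^-1%g.
  by rewrite groupV (to_repP x).1.
case: p => s A /= [rs [t [h [hH ->]]]].
have pi_th : pi (aX (val t) h) = aS s h by rewrite piE // (eqP (valP t)).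
pose x := aX (val t) h; have [gH gE] := to_repP x.
have xs : rep (pi x) = s by rewrite pi_th repP.1.
exists x; rewrite /fibre_coord; move: (fibre_to_rep x); rewrite xs => q.
have kK : (h * to_rep x)%g \in stabH H aS s.
  by apply/stabHP; rewrite groupM // aSM // -pi_th gE xs.
rewrite -(ind_cls_shift (K := stabH_group HS s) t h (fibre_Hset s) kK).
have -> : Sub (aX x (to_rep x)) q = fibre_act s t (h * to_rep x)%g.
  by apply: val_inj; rewrite fibre_actE //= aXM.
by rewrite invMg -mulgA mulVg mulg1.
Qed.

Lemma fibre_coord_equiv : Hequiv H aX (@ind_act gT TS fibre) fibre_coord.
Proof.
have [[_ aSM] [_ aXM]] := (HS, HX); move=> x h hH.
have Er : rep (pi (aX x h)) = rep (pi x) by rewrite piE // repP.1.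
have [g'H g'E] := to_repP (aX x h); have [gH gE] := to_repP x.
rewrite /fibre_coord; move: (fibre_to_rep (aX x h)); rewrite Er => q /=.
rewrite ind_act_cls.
set g := to_rep x in gH gE *; set g' := to_rep (aX x h) in g'H g'E q *.
pose k := (g^-1 * h * g')%g.
have gk : (g * k = h * g')%g by rewrite /k !mulgA mulgV mul1g.
have kH : k \in H by rewrite !groupM ?groupV.
have kK : k \in stabH H aS (rep (pi x)).
  apply/stabHP; split=> //.
  by rewrite -gE -aSM ?groupM ?groupV // gk aSM // -piE // g'E Er.
rewrite -(ind_cls_shift (K := stabH_group HS _) _ (g^-1 * h)%g (fibre_Hset _) kK).
have -> : Sub (aX (aX x h) g') q = fibre_act _ (Sub (aX x g) (fibre_to_rep x)) k.
  by apply: val_inj; rewrite fibre_actE //= -!aXM // gk.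
by rewrite /k !invMg invgK -!mulgA mulKVg mulVg mulg1.
Qed.

End Fibration.

Arguments fibre_act {gT TS TX} aX pi s.

Lemma coprod_closed_fibred (gT : finGroupType) (G : {group gT}) (C : assignment gT)
    (H : {group gT}) (TS : finType) (aS : TS -> gT -> TS) (TX : finType)
    (aX : TX -> gT -> TX) (pi : TX -> TS) :
  coprod_closed G C -> H \subset G ->
  is_Hset H TS aS -> is_Hset H TX aX -> Hequiv H aX aS pi -> C H TS aS ->
  (forall s, C (stabH H aS s) (fibre pi s) (fibre_act aX pi s)) -> C H TX aX.
Proof.
move=> Ccop sHG HS HX piE CS Cfib; have [rep repP] := exists_orbit_reps HS.
apply: (Ccop H sHG TS aS HS CS rep repP (fibre pi) (fibre_act aX pi) _ TX aX HX
         (fibre_coord piE repP)).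
- by move=> s _; split; [exact: fibre_Hset | exact: Cfib].
- exact: fibre_coord_inj.
- exact: fibre_coordP.
- exact: fibre_coord_equiv.
Qed.

Lemma exists_pos_avoid_ratios (R : realFieldType) (I : finType) (c d : I -> R) :
  exists2 eps : R, 0 < eps & forall i, c i = eps * d i -> c i = 0.
Proof.
pose S := \sum_i `|c i / d i|; have S_ge0 : 0 <= S by apply: sumr_ge0.
exists (1 + S) => [|i ci]; first lra.
have [di0 | di0] := eqVneq (d i) 0; first by rewrite ci di0 mulr0.
have le_ratio : `|c i / d i| <= S by rewrite /S (bigD1 i) //= lerDl sumr_ge0.
have ratioE : c i / d i = 1 + S by rewrite ci mulfK.
have := ler_norm (c i / d i); lra.
Qed.

Lemma exists_separating_scale (R : realFieldType) (X : finType) m n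
    (a u : X -> 'M[R]_(m, n)) :
  exists2 eps : R, 0 < eps &
    forall x y, a x + eps *: u x = a y + eps *: u y -> a x = a y /\ u x = u y.
Proof.
pose c (q : X * X * 'I_m * 'I_n) := (a q.1.1.1 - a q.1.1.2) q.1.2 q.2.
pose d (q : X * X * 'I_m * 'I_n) := (u q.1.1.2 - u q.1.1.1) q.1.2 q.2.
have [eps eps_gt0 epsP] := exists_pos_avoid_ratios c d.
exists eps => // x y E.
have diffE : a x - a y = eps *: (u y - u x).
  by apply/eqP; rewrite scalerBr subr_eq addrAC [eps *: u y + _]addrC -E addrK.
have a_eq : a x = a y.
  apply/eqP; rewrite -subr_eq0; apply/eqP/matrixP => i j; rewrite [RHS]mxE.
  by have := epsP (x, y, i, j); rewrite /c /d /= diffE mxE; apply.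
by split=> //; move: E; rewrite a_eq => /addrI /(scalerI (lt0r_neq0 eps_gt0)).
Qed.

Section FR.
Variables (gT : finGroupType) (G : {group gT}) (R : realType) (N : nat).
Variable rho : gT -> 'M[R]_N.
Hypothesis rhoG : mx_repr G rho.

Lemma rho1 : rho 1%g = 1%:M.
Proof. by case: rhoG. Qed.

Lemma rhoM x y : x \in G -> y \in G -> rho (x * y)%g = rho x *m rho y.
Proof. by case: rhoG => _; apply. Qed.

Lemma FR_iso : iso_closed G (FR rho).
Proof.
move=> H _ T T' a a' _ _ f [g fK gK] fE [e [e_inj eE]].
exists (e \o g); split=> [x y /= /e_inj /(can_inj gK) // | y h hH /=].
by rewrite -{1}(gK y) -fE // fK eE.
Qed.

Lemma FR_restr : restr_closed G (FR rho).
Proof.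
move=> H K _ sKH T a _ [e [e_inj eE]]; exists e; split=> // x h hK.
exact/eE/(subsetP sKH).
Qed.

Lemma FR_conj : conj_closed G (FR rho).
Proof.
move=> H sHG g gG T a _ [e [e_inj eE]].
have rhoK v : v *m rho g *m rho g^-1 = v.
  by rewrite -mulmxA -rhoM ?groupV // mulgV rho1 mulmx1.
exists (fun x => e x *m rho g); split=> [x y /= E | x k].
  by apply: e_inj; rewrite -[e x]rhoK -[e y]rhoK E.
rewrite mem_conjg => kH /=; have kgG : (k ^ g^-1)%g \in G by apply: (subsetP sHG).
have kG : k \in G by rewrite -(conjgKV g k) groupJ.
have -> : (g * k * g^-1)%g = (k ^ g^-1)%g by rewrite /conjg invgK mulgA.
rewrite eE // -mulmxA -rhoM // -mulmxA -rhoM //.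
by congr (_ *m rho _); rewrite /conjg invgK -!mulgA mulVg mulg1.
Qed.

Lemma FR_point : point_closed G (FR rho).
Proof.
move=> H _ _; exists (fun=> 0); split=> [[] [] // | x h _].
by rewrite mul0mx.
Qed.

Lemma FR_of_pair (H : {group gT}) (T : finType) (act : T -> gT -> T)
    (a u : T -> 'rV[R]_N) :
  (forall x h, h \in H -> a (act x h) = a x *m rho h) ->
  (forall x h, h \in H -> u (act x h) = u x *m rho h) ->
  (forall x y, a x = a y -> u x = u y -> x = y) -> FR rho H act.
Proof.
move=> aE uE au_inj; have [eps _ epsP] := exists_separating_scale a u.
exists (fun x => a x + eps *: u x); split=> [x y /epsP[] | x h hH]; first exact: au_inj.
by rewrite aE // uE // mulmxDl scalemxAl.
Qed.

Section Coproduct.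
Variables (H : {group gT}) (TS : finType) (aS : TS -> gT -> TS) (rep : TS -> TS).
Variables (T : TS -> finType) (aT : forall s, T s -> gT -> T s).
Variables (eS : TS -> 'rV[R]_N) (e : forall s, T s -> 'rV[R]_N).
Arguments aT : clear implicits.
Arguments e : clear implicits.
Hypotheses (sHG : H \subset G) (HS : is_Hset H TS aS) (repP : orbit_reps H aS rep).
Hypotheses (eS_inj : injective eS)
  (eSE : forall s h, h \in H -> eS (aS s h) = eS s *m rho h).
Hypothesis HT : forall s, rep s = s -> is_Hset (stabH H aS s) (T s) (aT s).
Hypotheses (e_inj : forall s, rep s = s -> injective (e s))
  (eE : forall s, rep s = s ->
     forall t k, k \in stabH H aS s -> e s (aT s t k) = e s t *m rho k).

(* The coproduct embeds into R + R by [t, h] |-> (eS s * rho h, e s t * rho h);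
   coprod_vec is the graph of this map. *)
Definition coprod_vec (p : {s : TS & {set (T s * gT)}}) (v : 'rV[R]_N * 'rV[R]_N) :=
  exists t h, [/\ h \in H, rep (tag p) = tag p,
    tagged p = ind_cls (stabH H aS (tag p)) (aT (tag p)) t h &
    v = (eS (tag p) *m rho h, e (tag p) t *m rho h)].

Lemma coprod_vec_exists p : coprod_elt H aS rep aT p -> exists v, coprod_vec p v.
Proof.
by case: p => s A [rs [t [h [hH EA]]]]; exists (eS s *m rho h, e s t *m rho h), t, h.
Qed.

Lemma coprod_vec_uniq p v v' : coprod_vec p v -> coprod_vec p v' -> v = v'.
Proof.
have inG := subsetP sHG; have [aS1 aSM] := HS.
case: p => s A [t [h [hH rs /= -> ->]]] [t' [h' [h'H _ /= E ->]]].
have [k kK [-> ->]] := eq_ind_cls (K := stabH_group HS s) (HT rs) E.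
have /stabHP[kH ks] := kK.
have kVs : aS s k^-1%g = s by rewrite -{1}ks -aSM ?groupV // mulgV aS1.
rewrite rhoM ?groupV ?inG // mulmxA -eSE ?groupV // kVs.
by rewrite eE // mulmxA -(mulmxA _ (rho k)) -rhoM ?groupV ?inG // mulgV rho1 mulmx1.
Qed.

Lemma coprod_vec_act p v g : g \in H ->
  coprod_vec p v -> coprod_vec (ind_act p g) (v.1 *m rho g, v.2 *m rho g).
Proof.
have inG := subsetP sHG.
case: p => s A gH [t [h [hH rs /= -> ->]]]; exists t, (h * g)%g.
by rewrite groupM // ind_act_cls !rhoM ?inG // !mulmxA.
Qed.

Lemma coprod_vec_inj p p' v : coprod_vec p v -> coprod_vec p' v -> p = p'.
Proof.
have inG := subsetP sHG; have [aS1 aSM] := HS.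
case: p p' => s A [s' A'] [t [h [hH /= rs -> ->]]] [t' [h' [h'H /= rs' -> [eSh eh]]]].
have Eh : aS s h = aS s' h' by apply: eS_inj; rewrite !eSE.
have ss' : s = s' by rewrite -rs -rs' -(repP.1 s h hH) -(repP.1 s' h' h'H) Eh.
subst s'; pose k := (h * h'^-1)%g.
have kK : k \in stabH H aS s.
  by apply/stabHP; rewrite groupM ?groupV // aSM ?groupV // Eh -aSM ?groupV // mulgV aS1.
have tk : aT s t k = t'.
  apply: (e_inj rs); rewrite eE // rhoM ?groupV ?inG // mulmxA eh.
  by rewrite -mulmxA -rhoM ?groupV ?inG // mulgV rho1 mulmx1.
have -> : h' = (k^-1 * h)%g by rewrite invMg invgK mulgKV.
by rewrite -tk (ind_cls_shift (K := stabH_group HS s) _ _ (HT rs) kK).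
Qed.

End Coproduct.

Lemma FR_coprod : coprod_closed G (FR rho).
Proof.
move=> H sHG TS aS HS [eS [eS_inj eSE]] rep repP T aT HT TX aX HX f f_inj fP fE.
have [e eP] : exists e : forall s, T s -> 'rV[R]_N, forall s, rep s = s ->
    injective (e s) /\
    forall t k, k \in stabH H aS s -> e s (aT s t k) = e s t *m rho k.
  suff e_ex s : exists es : T s -> 'rV[R]_N, rep s = s -> injective es /\
      forall t k, k \in stabH H aS s -> es (aT s t k) = es t *m rho k.
    exact: fin_all_exists e_ex.
  have [rs | nrs] := eqVneq (rep s) s; first by have [_ [es esP]] := HT s rs; exists es.
  by exists (fun=> 0) => rs; rewrite rs eqxx in nrs.
have [v vP] : exists v, forall x, coprod_vec H aS rep aT eS e (f x) (v x).
  suff v_ex x : exists w, coprod_vec H aS rep aT eS e (f x) w by exact: fin_all_exists v_ex.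
  by apply/coprod_vec_exists/fP; exists x.
have HTs s rs := (HT s rs).1; have e_inj s rs := (eP s rs).1; have eE s rs := (eP s rs).2.
have vE x h : h \in H -> v (aX x h) = ((v x).1 *m rho h, (v x).2 *m rho h).
  move=> hH; apply: (coprod_vec_uniq sHG HS eSE HTs eE (vP (aX x h))).
  by rewrite fE //; apply: coprod_vec_act.
apply: (FR_of_pair (a := fun x => (v x).1) (u := fun x => (v x).2)).
- by move=> x h /vE ->.
- by move=> x h /vE ->.
move=> x y eq1 eq2; apply/f_inj/(coprod_vec_inj sHG HS repP eS_inj eSE HTs e_inj eE (vP x)).
by rewrite [v x]surjective_pairing eq1 eq2 -surjective_pairing.
Qed.

Lemma FR_wis : weak_indexing_system G (FR rho).
Proof.
by split; [exact: FR_iso | exact: FR_restr | exact: FR_conj | exact: FR_point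
          | exact: FR_coprod].
Qed.

Section Image.
Variables (H : {group gT}) (TX : finType) (aX : TX -> gT -> TX) (p : TX -> 'rV[R]_N).
Hypotheses (sHG : H \subset G) (pE : forall x h, h \in H -> p (aX x h) = p x *m rho h).

Definition img : finType := seq_sub (codom p).

Definition img_act (v : img) h : img := insubd v (val v *m rho h).

Definition img_proj x : img := Sub (p x) (codom_f p x).

Lemma img_actE v h : h \in H -> val (img_act v h) = val v *m rho h.
Proof.
by move=> hH; rewrite insubdK //; have /codomP[x ->] := valP v; rewrite -pE ?codom_f.
Qed.

Lemma img_Hset : is_Hset H img img_act.
Proof.
have inG := subsetP sHG; split=> [v | v a b aH bH]; apply: val_inj.
  by rewrite img_actE // rho1 mulmx1.
by rewrite !img_actE ?groupM // rhoM ?inG // mulmxA.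
Qed.

Lemma FR_img : FR rho H img_act.
Proof. by exists val; split=> [|v h /img_actE]; [exact: val_inj | ]. Qed.

Lemma img_proj_equiv : Hequiv H aX img_act img_proj.
Proof. by move=> x h hH; apply: val_inj; rewrite img_actE //= pE. Qed.

End Image.

End FR.

Arguments img_act {gT R N} rho {TX} p.

Section Join.
Variables (gT : finGroupType) (G : {group gT}) (R : realType) (n n' : nat).
Variables (rho : gT -> 'M[R]_n) (rho' : gT -> 'M[R]_n').
Hypotheses (rhoG : mx_repr G rho) (rho'G : mx_repr G rho').

Lemma mul_row_dsum_rep (u : 'rV[R]_n) (u' : 'rV[R]_n') g :
  row_mx u u' *m dsum_rep rho rho' g = row_mx (u *m rho g) (u' *m rho' g).
Proof. by rewrite /dsum_rep mul_row_block !mulmx0 addr0 add0r. Qed.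

Lemma dsum_repr : mx_repr G (dsum_rep rho rho').
Proof.
have [[rho1 rhoM] [rho'1 rho'M]] := (rhoG, rho'G); split.
  by rewrite /dsum_rep rho1 rho'1 -scalar_mx_block.
move=> x y xG yG; rewrite /dsum_rep rhoM // rho'M // mulmx_block.
by rewrite !mulmx0 !mul0mx !addr0 add0r.
Qed.

Lemma FR_sub_dsuml : sub_assign G (FR rho) (FR (dsum_rep rho rho')).
Proof.
move=> H _ T a _ [e [e_inj eE]]; exists (fun x => row_mx (e x) 0).
by split=> [x y /eq_row_mx[/e_inj] | x h hH /=]; rewrite ?mul_row_dsum_rep ?eE ?mul0mx.
Qed.

Lemma FR_sub_dsumr : sub_assign G (FR rho') (FR (dsum_rep rho rho')).
Proof.
move=> H _ T a _ [e [e_inj eE]]; exists (fun x => row_mx 0 (e x)).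
by split=> [x y /eq_row_mx[_ /e_inj] | x h hH /=]; rewrite ?mul_row_dsum_rep ?eE ?mul0mx.
Qed.

Lemma FR_dsum_sub_join (D : assignment gT) : weak_indexing_system G D ->
  sub_assign G (FR rho) D -> sub_assign G (FR rho') D ->
  sub_assign G (FR (dsum_rep rho rho')) D.
Proof.
move=> [_ _ _ _ Dcop] FR_D FR'_D H sHG TX aX HX [e [e_inj eE]].
pose p1 x := lsubmx (e x); pose p2 x := rsubmx (e x).
have pE x h : h \in H -> p1 (aX x h) = p1 x *m rho h /\ p2 (aX x h) = p2 x *m rho' h.
  move=> hH; rewrite /p1 /p2 eE // -[e x]hsubmxK mul_row_dsum_rep.
  by rewrite !row_mxKl !row_mxKr.
have p1E x h (hH : h \in H) := (pE x h hH).1.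
have HS := img_Hset rhoG sHG p1E; have piE := img_proj_equiv p1E.
apply: (coprod_closed_fibred Dcop sHG HS HX piE).
  exact: (FR_D H sHG _ _ HS (FR_img p1E)).
move=> s; have sKG := subset_trans (stabH_sub H (img_act rho p1) s) sHG.
apply: (FR'_D (stabH_group HS s) sKG _ _ (fibre_Hset HS HX piE s)).
exists (fun y => p2 (val y)); split=> [y z /= p2yz | y k kK /=].
  have p1_fibre (w : fibre (img_proj p1) s) : lsubmx (e (val w)) = val s
    := congr1 val (eqP (valP w)).
  apply/val_inj/e_inj; rewrite -[e (val y)]hsubmxK -[e (val z)]hsubmxK.
  by rewrite !p1_fibre; congr row_mx.
by rewrite (fibre_actE piE) // (pE _ _ (subsetP (stabH_sub _ _ _) _ kK)).2.
Qed.

End Join.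

Theorem mainTheorem11 (gT : finGroupType) (G : {group gT}) (R : realType)
    (n n' : nat) (rho : gT -> 'M[R]_n) (rho' : gT -> 'M[R]_n') :
  orth_rep G rho -> orth_rep G rho' ->
  is_wis_join G (FR rho) (FR rho') (FR (dsum_rep rho rho')).
Proof.
move=> [rhoG _] [rho'G _]; split.
- exact/FR_wis/dsum_repr.
- exact: FR_sub_dsuml.
- exact: FR_sub_dsumr.
- by move=> D; apply: FR_dsum_sub_join.
Qed.
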